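(* If $G$ is a conference graph on $n$ vertices, then $\chi_v(\overline{G})=\chi_v(G)=\sqrt{n}=\chi_{sv}(G)=\chi_{sv}(\overline{G})$.
   Context: A conference graph on $n$ vertices ($n\ge5$) is a strongly regular graph with parameters $(n,\tfrac12(n-1),\tfrac14(n-5),\tfrac14(n-1))$, i.e. a $\tfrac12(n-1)$-regular graph on $n$ vertices in which adjacent vertices have exactly $\tfrac14(n-5)$ and distinct nonadjacent vertices exactly $\tfrac14(n-1)$ common neighbours; $\overline{G}$ is the complement. For a graph on $n$ vertices with at least one edge, a vector $t$-coloring ($t\ge2$) assigns unit vectors $u_i\in\mathbb R^n$ to vertices with $u_i^{\mathrm T}u_j\le-\frac1{t-1}$ for every edge $\{i,j\}$, and a strict vector $t$-coloring requires equality on every edge; $\chi_v$ and $\chi_{sv}$ are the smallest $t\ge2$ admitting a vector, resp. strict vector, $t$-coloring. *)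

From HB Require Import structures.
From mathcomp Require Import all_boot all_order all_algebra.
From mathcomp Require Import reals.
Set Implicit Arguments. Unset Strict Implicit. Unset Printing Implicit Defensive.
Import Order.TTheory GRing.Theory Num.Theory.
Local Open Scope ring_scope.

Definition simple_graph (n : nat) (e : rel 'I_n) : Prop :=
  symmetric e /\ irreflexive e.

Definition compl_graph (n : nat) (e : rel 'I_n) : rel 'I_n :=
  fun u v => (u != v) && ~~ e u v.

Definition has_edge (n : nat) (e : rel 'I_n) : Prop := exists u v, e u v.

Definition common_nbrs (n : nat) (e : rel 'I_n) (u v : 'I_n) : nat :=
  #|[set w | e u w && e v w]|.

Definition degree (n : nat) (e : rel 'I_n) (v : 'I_n) : nat :=
  #|[set w | e v w]|.

Definition srg (n : nat) (e : rel 'I_n) (k lam mu : nat) : Prop :=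
  simple_graph e /\
  (forall v, degree e v = k) /\
  (forall u v, u != v -> e u v -> common_nbrs e u v = lam) /\
  (forall u v, u != v -> ~~ e u v -> common_nbrs e u v = mu).

Definition conference_graph (n : nat) (e : rel 'I_n) : Prop :=
  (5 <= n)%N /\
  exists k lam mu : nat,
    [/\ (2 * k = n - 1)%N, (4 * lam = n - 5)%N, (4 * mu = n - 1)%N
      & srg e k lam mu].

Definition dotv (R : realType) (n : nat) (u v : 'rV[R]_n) : R :=
  \sum_(k < n) u 0 k * v 0 k.

Definition vector_coloring (R : realType) (n : nat) (e : rel 'I_n) (t : R) : Prop :=
  exists u : 'I_n -> 'rV[R]_n,
    (forall i, dotv (u i) (u i) = 1) /\
    (forall i j, e i j -> dotv (u i) (u j) <= - (t - 1)^-1).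

Definition strict_vector_coloring (R : realType) (n : nat) (e : rel 'I_n) (t : R) : Prop :=
  exists u : 'I_n -> 'rV[R]_n,
    (forall i, dotv (u i) (u i) = 1) /\
    (forall i j, e i j -> dotv (u i) (u j) = - (t - 1)^-1).

Definition is_vector_chromatic_number (R : realType) (n : nat) (e : rel 'I_n) (x : R) : Prop :=
  [/\ 2 <= x, vector_coloring e x
    & forall t : R, 2 <= t -> vector_coloring e t -> x <= t].

Definition is_strict_vector_chromatic_number (R : realType) (n : nat) (e : rel 'I_n) (x : R) : Prop :=
  [/\ 2 <= x, strict_vector_coloring e x
    & forall t : R, 2 <= t -> strict_vector_coloring e t -> x <= t].

From mathcomp Require Import all_boot all_order all_algebra.
From mathcomp Require Import reals.
From mathcomp Require Import ring lra zify.
Set Implicit Arguments. Unset Strict Implicit. Unset Printing Implicit Defensive.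
Import Order.TTheory GRing.Theory Num.Theory.
Local Open Scope ring_scope.

(* Write n = s^2 and mu = (n - 1) / 4.  The adjacency matrix A of a conference
   graph satisfies A^2 = mu I - A + mu J and A J = 2 mu J, and so does the
   adjacency matrix J - I - A of its complement; hence on the orthogonal of the
   all-ones vector A has the eigenvalues (s - 1) / 2 and - (s + 1) / 2.  The
   projection onto the eigenspace of - (s + 1) / 2, rescaled to unit diagonal,
   is the Gram matrix of a strict vector s-colouring.  Conversely, if G is the
   Gram matrix of a vector t-colouring, pairing G with the positive
   semidefinite matrices J and s E, E the projection onto the eigenspace of
   (s - 1) / 2, gives 0 <= tr (s E G) <= n (1 + s) / 2 (1 - (s - 1) / (t - 1)),
   whence t >= s. *)

Definition adjmx (R : pzSemiRingType) (n : nat) (e : rel 'I_n) : 'M[R]_n :=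
  \matrix_(i, j) (e i j)%:R.

Lemma mul_const_mx1 (R : pzSemiRingType) (n : nat) :
  (const_mx 1 : 'M[R]_n) *m (const_mx 1 : 'M[R]_n) = n%:R *: const_mx 1.
Proof.
apply/matrixP=> i j; rewrite !mxE.
under eq_bigr do rewrite !mxE mulr1.
by rewrite sumr_const card_ord mulr1.
Qed.

Section BoseMesner.
Variables (R : comNzRingType) (n : nat) (A : 'M[R]_n).
Local Notation J := (const_mx 1 : 'M[R]_n).

Definition bmx (a b c : R) : 'M[R]_n := a%:M + b *: A + c *: J.

Lemma bmxE a b c i j : bmx a b c i j = a *+ (i == j) + b * A i j + c.
Proof. by rewrite !mxE mulr1. Qed.

Lemma scale_bmx r a b c : r *: bmx a b c = bmx (r * a) (r * b) (r * c).
Proof. by rewrite !scalerDr !scalerA scale_scalar_mx. Qed.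

Lemma mxtrace_bmx_mul a b c (G : 'M[R]_n) :
  \tr (bmx a b c *m G) = a * \tr G + b * \tr (A *m G) + c * \tr (J *m G).
Proof. by rewrite !mulmxDl mul_scalar_mx -!scalemxAl !mxtraceD !mxtraceZ. Qed.

Lemma bmx_const : bmx 0 0 1 = J.
Proof. by apply/matrixP=> i j; rewrite bmxE mxE; ring. Qed.

Hypothesis symA : A^T = A.

Lemma trmx_bmx a b c : (bmx a b c)^T = bmx a b c.
Proof. by rewrite !linearD !linearZ /= tr_scalar_mx symA trmx_const. Qed.

Variables (x y z k : R).
Hypotheses (sqrA : A *m A = bmx x y z) (AJ : A *m J = k *: J).

Lemma const_mx1_mul : J *m A = k *: J.
Proof. by rewrite -[A]symA -[J]trmx_const -trmx_mul AJ linearZ /= trmx_const. Qed.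

Lemma mul_bmx a1 b1 c1 a2 b2 c2 :
  bmx a1 b1 c1 *m bmx a2 b2 c2 =
  bmx (a1 * a2 + b1 * b2 * x) (a1 * b2 + b1 * a2 + b1 * b2 * y)
      (a1 * c2 + c1 * a2 + b1 * b2 * z + (b1 * c2 + c1 * b2) * k + c1 * c2 * n%:R).
Proof.
rewrite !mulmxDl !mulmxDr !mul_scalar_mx !mul_mx_scalar -!scalemxAl -!scalemxAr.
rewrite sqrA AJ const_mx1_mul mul_const_mx1.
apply/matrixP=> i j; rewrite !mxE.
by case: (i == j); rewrite ?mulr1n ?mulr0n; ring.
Qed.

End BoseMesner.


Lemma bmx_bmx (R : comNzRingType) (n : nat) (A : 'M[R]_n) a b c a' b' c' :
  bmx (bmx A a' b' c') a b c = bmx A (a + b * a') (b * b') (b * c' + c).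
Proof. by apply/matrixP=> i j; rewrite !bmxE; ring. Qed.

Lemma sumr_bool_card (R : pzSemiRingType) (T : finType) (p : pred T) :
  \sum_w ((p w)%:R : R) = #|[set w | p w]|%:R.
Proof.
rewrite -sum1dep_card natr_sum [RHS]big_mkcond /=.
by apply: eq_bigr => w _; case: (p w).
Qed.

Section AdjacencyMatrix.
Variables (R : comNzRingType) (n : nat) (e : rel 'I_n).
Local Notation A := (adjmx R e).
Local Notation J := (const_mx 1 : 'M[R]_n).

Lemma trmx_adjmx : symmetric e -> A^T = A.
Proof. by move=> esym; apply/matrixP=> i j; rewrite !mxE esym. Qed.

Lemma adjmx_mul_const k : (forall v, degree e v = k) -> A *m J = k%:R *: J.
Proof.
move=> deg_e; apply/matrixP=> i j; rewrite !mxE.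
under eq_bigr do rewrite !mxE mulr1.
by rewrite sumr_bool_card -[X in X%:R]/(degree e i) deg_e mulr1.
Qed.

Lemma srg_adjmx_sqr k lam mu : srg e k lam mu ->
  A *m A = bmx A (k%:R - mu%:R) (lam%:R - mu%:R) mu%:R.
Proof.
move=> [[esym eirr] [deg_e [adj_e nadj_e]]]; apply/matrixP=> i j.
rewrite bmxE !mxE.
under eq_bigr do rewrite !mxE -natrM mulnb (esym _ j).
rewrite sumr_bool_card -[X in X%:R]/(common_nbrs e i j).
have [<-|ij] := eqVneq i j.
  have -> : common_nbrs e i i = degree e i.
    by apply: eq_card => w; rewrite !inE andbb.
  by rewrite deg_e eirr /=; ring.
case eij: (e i j).
  by rewrite adj_e //=; ring.
by rewrite nadj_e ?eij //=; ring.
Qed.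

Lemma adjmx_compl : irreflexive e -> adjmx R (compl_graph e) = bmx A (-1) (-1) 1.
Proof.
move=> eirr; apply/matrixP=> i j; rewrite bmxE !mxE /compl_graph.
have [<-|ij] := eqVneq i j; first by rewrite eirr /=; ring.
by case: (e i j); rewrite /=; ring.
Qed.

End AdjacencyMatrix.

(* For a conference graph lam = mu - 1 and k = 2 mu, so the identity
   A^2 = (k - mu) I + (lam - mu) A + mu J of strongly regular graphs takes
   this form. *)
Definition conference_mx (R : numFieldType) (n : nat) (A : 'M[R]_n) : Prop :=
  [/\ A^T = A,
      A *m A = bmx A ((n%:R - 1) / 4) (-1) ((n%:R - 1) / 4)
    & A *m const_mx 1 = ((n%:R - 1) / 2) *: (const_mx 1 : 'M[R]_n)].

Lemma conference_graph_mx (R : numFieldType) (n : nat) (e : rel 'I_n) :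
  conference_graph e -> conference_mx (adjmx R e).
Proof.
move=> [n_ge5 [k [lam [mu [k_eq lam_eq mu_eq srg_e]]]]].
have n_ge1 : (1 <= n)%N by apply: leq_trans n_ge5.
have kE : (k%:R : R) = (n%:R - 1) / 2.
  by rewrite -(natrB _ n_ge1) -k_eq natrM; field.
have muE : (mu%:R : R) = (n%:R - 1) / 4.
  by rewrite -(natrB _ n_ge1) -mu_eq natrM; field.
have lamE : (lam%:R : R) = mu%:R - 1.
  have -> : mu = lam.+1 by lia.
  by rewrite -natr1 addrK.
have [[esym _] [deg_e _]] := srg_e.
split; first exact: trmx_adjmx.
  by rewrite (srg_adjmx_sqr _ srg_e) lamE kE muE; congr bmx; field.
by rewrite (adjmx_mul_const _ deg_e) kE.
Qed.

Section ConferenceMatrix.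
Variables (R : realFieldType) (n : nat) (A : 'M[R]_n).
Hypothesis confA : conference_mx A.

Lemma conference_mx_compl : conference_mx (bmx A (-1) (-1) 1).
Proof.
have [symA sqrA AJ] := confA.
split; first exact: trmx_bmx.
  by rewrite (mul_bmx symA sqrA AJ) bmx_bmx; congr bmx; field.
rewrite -!(bmx_const A) (mul_bmx symA sqrA AJ) scale_bmx.
by congr bmx; [ring | ring | field].
Qed.

Variables (s : R).
Hypotheses (s_gt0 : 0 < s) (sqr_s : s ^+ 2 = n%:R).

(* Up to the factors [s] and [2 s^2 / (s^2 - 1)], the matrices below are the
   orthogonal projections onto the eigenspaces of [A] for its eigenvalues
   [(s - 1) / 2] and [- (s + 1) / 2] orthogonal to the all-ones vector. *)
Lemma conference_pos_idem :
  let P := bmx A ((1 + s) / 2) 1 (- ((1 + s) / (2 * s))) in P *m P = s *: P.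
Proof.
have [symA sqrA AJ] := confA.
move=> P; have s_neq0 : s != 0 by rewrite gt_eqF.
rewrite /P (mul_bmx symA sqrA AJ) scale_bmx -sqr_s.
by congr bmx; field.
Qed.

Lemma conference_neg_idem : 1 < s ->
  let M := bmx A (1 - (s + 1)^-1) (- (s - 1)^-1 - (s + 1)^-1) (s + 1)^-1 in
  M *m M = (2 * s ^+ 2 / (s ^+ 2 - 1)) *: M.
Proof.
have [symA sqrA AJ] := confA.
move=> s_gt1 M; have s1_neq0 : s - 1 != 0 by rewrite subr_eq0 gt_eqF.
have s1'_neq0 : s + 1 != 0 by rewrite gt_eqF // addr_gt0.
have s21_neq0 : s ^+ 2 - 1 != 0 by rewrite subr_eq0 gt_eqF // exprn_egt1.
rewrite /M (mul_bmx symA sqrA AJ) scale_bmx -sqr_s.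
by congr bmx; field; rewrite s1_neq0 s1'_neq0 s21_neq0.
Qed.

End ConferenceMatrix.

Lemma mxtrace_mul_tr_ge0 (R : realDomainType) (m p : nat) (Y : 'M[R]_(m, p)) :
  0 <= \tr (Y *m Y^T).
Proof.
apply: sumr_ge0 => i _; rewrite mxE; apply: sumr_ge0 => j _.
by rewrite mxE -expr2 sqr_ge0.
Qed.

Lemma mxtrace_gram_mul_ge0 (R : realDomainType) (m p q : nat)
    (X : 'M[R]_(m, p)) (U : 'M[R]_(m, q)) :
  0 <= \tr (X *m X^T *m (U *m U^T)).
Proof.
rewrite -mulmxA mxtrace_mulC -!mulmxA mulmxA.
have -> : U^T *m X = (X^T *m U)^T by rewrite trmx_mul trmxK.
exact: mxtrace_mul_tr_ge0.
Qed.

Section ScaledProjection.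
Variables (R : rcfType) (n : nat) (P : 'M[R]_n) (r : R).
Hypotheses (symP : P^T = P) (sqrP : P *m P = r *: P) (r_gt0 : 0 < r).

Lemma scaled_proj_factor :
  let U := (Num.sqrt r)^-1 *: P in U *m U^T = P.
Proof.
move=> U; have sqrt_neq0 : Num.sqrt r != 0 by rewrite gt_eqF ?sqrtr_gt0.
rewrite /U linearZ /= symP -scalemxAl -scalemxAr sqrP !scalerA.
have -> : (Num.sqrt r)^-1 * (Num.sqrt r)^-1 * r = 1.
  by rewrite -[X in _ * X](sqr_sqrtr (ltW r_gt0)); field.
exact: scale1r.
Qed.

Lemma mxtrace_scaled_proj_mul_gram_ge0 (m : nat) (U : 'M[R]_(n, m)) :
  0 <= \tr (P *m (U *m U^T)).
Proof. by rewrite -scaled_proj_factor mxtrace_gram_mul_ge0. Qed.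

End ScaledProjection.

Section Gram.
Variable R : realType.

Definition gram (m n : nat) (u : 'I_m -> 'rV[R]_n) : 'M[R]_m :=
  \matrix_(i, j) dotv (u i) (u j).

Lemma dotvC (n : nat) (u v : 'rV[R]_n) : dotv u v = dotv v u.
Proof. by apply: eq_bigr => k _; rewrite mulrC. Qed.

Lemma gram_row (m n : nat) (U : 'M[R]_(m, n)) : gram (fun i => row i U) = U *m U^T.
Proof. by apply/matrixP=> i j; rewrite !mxE; apply: eq_bigr => k _; rewrite !mxE. Qed.

Lemma gramE (m n : nat) (u : 'I_m -> 'rV[R]_n) :
  gram u = (\matrix_i u i) *m (\matrix_i u i)^T.
Proof. by rewrite -gram_row; apply/matrixP=> i j; rewrite !mxE !rowK. Qed.

Lemma mxtrace_adjmx_gram_le (n : nat) (e : rel 'I_n) (k d : R)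
    (u : 'I_n -> 'rV[R]_n) :
  adjmx R e *m const_mx 1 = k *: (const_mx 1 : 'M[R]_n) ->
  (forall i j, e i j -> dotv (u i) (u j) <= d) ->
  \tr (adjmx R e *m gram u) <= n%:R * (k * d).
Proof.
move=> AJ edge_u.
have row_sum i : \sum_j adjmx R e i j = k.
  have := congr1 (fun M : 'M[R]_n => M i i) AJ; rewrite !mxE mulr1 => <-.
  by apply: eq_bigr => j _; rewrite !mxE mulr1.
have -> : n%:R * (k * d) = \sum_(i < n) k * d.
  by rewrite sumr_const card_ord mulr_natl.
apply: ler_sum => i _; rewrite mxE -(row_sum i) mulr_suml.
apply: ler_sum => j _; rewrite !mxE.
case: (boolP (e i j)) => [eij | _]; last by rewrite !mul0r.
by rewrite !mul1r dotvC edge_u.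
Qed.

End Gram.

Lemma strict_vector_coloringW (R : realType) (n : nat) (e : rel 'I_n) (t : R) :
  strict_vector_coloring e t -> vector_coloring e t.
Proof. by move=> [u [unit_u edge_u]]; exists u; split=> // i j /edge_u ->. Qed.

Section ConferenceColoring.
Variables (R : realType) (n : nat) (e : rel 'I_n).
Hypothesis conf_e : conference_mx (adjmx R e).
Variable s : R.
Hypotheses (s_gt0 : 0 < s) (sqr_s : s ^+ 2 = n%:R).
Local Notation A := (adjmx R e).

Lemma conference_vector_coloring_ge (t : R) :
  2 <= t -> vector_coloring e t -> s <= t.
Proof.
move=> t_ge2 [u [unit_u edge_u]].
have [symA _ AJ] := conf_e.
have n_gt0 : 0 < n%:R :> R by rewrite -sqr_s exprn_gt0.
have trG : \tr (gram u) = n%:R.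
  rewrite /mxtrace; under eq_bigr do rewrite mxE unit_u.
  by rewrite sumr_const card_ord.
have trPG : 0 <= \tr (bmx A ((1 + s) / 2) 1 (- ((1 + s) / (2 * s))) *m gram u).
  rewrite gramE; apply: (mxtrace_scaled_proj_mul_gram_ge0 _ _ s_gt0).
    exact: trmx_bmx.
  exact: conference_pos_idem.
have trJG : 0 <= \tr (const_mx 1 *m gram u).
  rewrite gramE; apply: (mxtrace_scaled_proj_mul_gram_ge0 _ _ n_gt0).
    exact: trmx_const.
  exact: mul_const_mx1.
have trAG := mxtrace_adjmx_gram_le AJ edge_u.
rewrite mxtrace_bmx_mul trG mul1r in trPG.
have cJ_ge0 : 0 <= (1 + s) / (2 * s) * \tr (const_mx 1 *m gram u).
  by rewrite mulr_ge0 // divr_ge0 ?mulr_ge0 ?addr_ge0 ?ltW.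
set y := (t - 1)^-1 in trAG.
have : 0 <= n%:R * ((1 + s) / 2 * (1 - (s - 1) * y)).
  rewrite -sqr_s in trPG trAG *; lra.
rewrite !pmulr_rge0 ?divr_gt0 ?addr_gt0 // subr_ge0.
by rewrite /y ler_pdivrMr; lra.
Qed.

Lemma conference_strict_vector_coloring :
  1 < s -> irreflexive e -> strict_vector_coloring e s.
Proof.
move=> s_gt1 eirr; have [symA _ _] := conf_e.
set M := bmx A (1 - (s + 1)^-1) (- (s - 1)^-1 - (s + 1)^-1) (s + 1)^-1.
set m := 2 * s ^+ 2 / (s ^+ 2 - 1).
have m_gt0 : 0 < m.
  by rewrite divr_gt0 ?mulr_gt0 ?exprn_gt0 // subr_gt0 exprn_egt1.
have gramM : gram (fun i => row i ((Num.sqrt m)^-1 *: M)) = M.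
  rewrite gram_row scaled_proj_factor //; first exact: trmx_bmx.
  exact: conference_neg_idem.
exists (fun i => row i ((Num.sqrt m)^-1 *: M)); split=> [i | i j eij].
  have := congr1 (fun G : 'M[R]_n => G i i) gramM; rewrite mxE => ->.
  by rewrite bmxE mxE eirr eqxx /=; ring.
have ij : i != j by apply: contraTneq eij => ->; rewrite eirr.
have := congr1 (fun G : 'M[R]_n => G i j) gramM; rewrite mxE => ->.
by rewrite bmxE mxE eij (negbTE ij) /=; ring.
Qed.

Lemma conference_vector_chromatic : 2 <= s -> irreflexive e ->
  is_vector_chromatic_number e s /\ is_strict_vector_chromatic_number e s.
Proof.
move=> s_ge2 eirr.
have s_gt1 : 1 < s by apply: lt_le_trans s_ge2; rewrite ltr1n.
have svc := conference_strict_vector_coloring s_gt1 eirr.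
split; split=> //.
- exact: strict_vector_coloringW.
- exact: conference_vector_coloring_ge.
- by move=> t t_ge2 /strict_vector_coloringW; apply: conference_vector_coloring_ge.
Qed.

End ConferenceColoring.

Theorem mainTheorem11 (R : realType) (n : nat) (e : rel 'I_n) :
  conference_graph e ->
  [/\ is_vector_chromatic_number (compl_graph e) (Num.sqrt (n%:R : R)),
      is_vector_chromatic_number e (Num.sqrt (n%:R : R)),
      is_strict_vector_chromatic_number e (Num.sqrt (n%:R : R))
    & is_strict_vector_chromatic_number (compl_graph e) (Num.sqrt (n%:R : R))].
Proof.
move=> conf_e; have [n_ge5 [_ [_ [_ [_ _ _ [[_ eirr] _]]]]]] := conf_e.
have sqr_s : Num.sqrt (n%:R : R) ^+ 2 = n%:R by rewrite sqr_sqrtr ?ler0n.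
have s_ge2 : 2 <= Num.sqrt (n%:R : R).
  have n_ge5R : 5 <= n%:R :> R by rewrite ler_nat.
  have := sqrtr_ge0 (n%:R : R); rewrite -sqr_s expr2 in n_ge5R; nra.
have s_gt0 : 0 < Num.sqrt (n%:R : R) by apply: lt_le_trans s_ge2.
have conf_A := conference_graph_mx R conf_e.
have conf_B : conference_mx (adjmx R (compl_graph e)).
  by rewrite adjmx_compl //; apply: conference_mx_compl.
have compl_irr : irreflexive (compl_graph e) by move=> i; rewrite /compl_graph eqxx.
have [vc_A svc_A] := conference_vector_chromatic conf_A s_gt0 sqr_s s_ge2 eirr.
have [vc_B svc_B] := conference_vector_chromatic conf_B s_gt0 sqr_s s_ge2 compl_irr.
by split.
Qed.
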